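(* Let $J_1,\dots,J_7$ be pairwise anticommuting orthogonal complex structures on $\mathfrak a=\mathbb R^8$, $\theta\in(0,\pi/2)$, $J'=J_7\cos\theta+J_6J_7\sin\theta$, and $V=\mathrm{Span}(J_1,\dots,J_6,J')$ with the inner product $\|J\|^2=-\frac18\mathrm{Tr}(J^2)$. Then for every $N\in O(\mathfrak a)$ with $NVN^{-1}\subset V$ (so that $K\mapsto N^{-1}KN$ is orthogonal on $V$) there exist $\varepsilon_7\in\{\pm1\}$ with $N^{-1}J_6N=J_6$, $N^{-1}J_7N=\varepsilon_7J_7$, $N^{-1}J'N=\varepsilon_7J'$. In particular there is no such $N$ with $N^{-1}J_6N=-J_6$, and for every inner product on $V$ whose restriction to $\mathrm{Span}(J_1,\dots,J_5)$ is standard and with $J_6,J'\perp J_i$ ($i\le5$), the pair $(V,\langle\cdot,\cdot\rangle)$ is not a WS-pair.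
   Context: Orthogonal complex structures on $\mathbb R^8$ are orthogonal matrices $J$ with $J^2=-I_8$. An inner product on $V\subset\mathfrak{so}(8)$ is standard if it is a positive multiple of $(J,K)\mapsto-\mathrm{Tr}(JK)$. For a Euclidean space $\mathfrak a$, a subspace $V\subset\mathfrak{so}(\mathfrak a)$ with inner product $\langle\cdot,\cdot\rangle$ defines the metric 2-step nilpotent Lie algebra $\mathfrak n=V\oplus\mathfrak a$ (orthogonal sum, $V$ central, $\langle J,[X,Y]\rangle=\langle JX,Y\rangle$); it is a WS-pair if the corresponding simply connected nilpotent Lie group with left-invariant metric is weakly symmetric. Standing fact: this holds iff for every $J\in V$, $X\in\mathfrak a$ there is $N\in\mathcal N(V)=\{N\in O(\mathfrak a): NVN^{-1}\subset V$, $K\mapsto NKN^{-1}$ orthogonal on $(V,\langle\cdot,\cdot\rangle)\}$ with $NX=-X$, $NJ=-JN$. *)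

From HB Require Import structures.
From mathcomp Require Import all_boot all_order all_algebra.
From mathcomp Require Import all_classical all_reals all_analysis.
Set Implicit Arguments. Unset Strict Implicit. Unset Printing Implicit Defensive.
Import Order.TTheory GRing.Theory Num.Theory.
Local Open Scope ring_scope.

Section Defs.
Variables (R : realType) (n : nat).

Definition orthogonal_mx (N : 'M[R]_n) : Prop := N *m N^T = 1%:M.

Definition ocs (J : 'M[R]_n) : Prop := orthogonal_mx J /\ J *m J = - 1%:M.

Definition inner_product_on (V : {vspace 'M[R]_n})
  (ip : 'M[R]_n -> 'M[R]_n -> R) : Prop :=
  [/\ (forall K L, K \in V -> L \in V -> ip K L = ip L K),
      (forall (a : R) K L M, K \in V -> L \in V -> M \in V ->
          ip (a *: K + L) M = a * ip K M + ip L M)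
    & (forall K, K \in V -> K != 0 -> 0 < ip K K)].

Definition standard_on (W : {vspace 'M[R]_n})
  (ip : 'M[R]_n -> 'M[R]_n -> R) : Prop :=
  exists2 c : R, 0 < c &
    forall K L, K \in W -> L \in W -> ip K L = c * (- \tr (K *m L)).

Definition in_NV (V : {vspace 'M[R]_n}) (ip : 'M[R]_n -> 'M[R]_n -> R)
  (N : 'M[R]_n) : Prop :=
  [/\ orthogonal_mx N,
      (forall K, K \in V -> N *m K *m invmx N \in V)
    & (forall K L, K \in V -> L \in V ->
         ip (N *m K *m invmx N) (N *m L *m invmx N) = ip K L)].

(* WS-pair, via the standing characterization of weak symmetry *)
Definition WS_pair (V : {vspace 'M[R]_n}) (ip : 'M[R]_n -> 'M[R]_n -> R) : Prop :=
  forall (J : 'M[R]_n) (X : 'cV[R]_n), J \in V ->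
    exists N : 'M[R]_n, [/\ in_NV V ip N, N *m X = - X & N *m J = - (J *m N)].

End Defs.

From HB Require Import structures.
From mathcomp Require Import all_boot all_order all_algebra.
From mathcomp Require Import all_classical all_reals all_analysis.
From mathcomp Require Import zify ring lra.
Set Implicit Arguments. Unset Strict Implicit. Unset Printing Implicit Defensive.
Import Order.TTheory GRing.Theory Num.Theory.
Local Open Scope ring_scope.

(* Conjugation by N preserves V, anticommutators and scalar matrices.  In V = W + R J6 + R J'
   (W = Span(J1,...,J5)) all pairs of the J's anticommute except J_i and J' (i <= 5), whose
   anticommutator 2 sin(theta) J_i J6 J7 is not scalar (it has trace 0 and is invertible).
   Hence R J6 is the set of L in V whose anticommutator with every element of V is scalar, so
   N^-1 J6 N = +-J6; the elements of V anticommuting with J6 and squaring to a scalar lie in W or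
   in R J', which forces N^-1 J' N = +-J' and N^-1 J1 N in W.  Writing
   J7 = cos(theta) J' - sin(theta) J6 J', the relation J1 J7 = - J7 J1 then rules out
   N^-1 J6 N = -J6.  A WS-pair would need exactly such an N. *)

Lemma span_ind (K : fieldType) (vT : vectType K) (P : vT -> Prop) (X : seq vT) :
    P 0 -> (forall a u v, P u -> P v -> P (a *: u + v)) -> {in X, forall x, P x} ->
  {in <<X>>%VS, forall u, P u}.
Proof.
move=> P0 PD PX u /(@coord_span _ _ _ (in_tuple X)) ->.
apply: (big_ind P) => [//|v w Pv Pw|i _]; first by rewrite -[v]scale1r; apply: PD.
by rewrite -[_ *: _]addr0; apply: PD => //; apply/PX/mem_nth.
Qed.

Section Matrices.
Variables (R : numFieldType) (n : nat).
Implicit Types (A B K L P : 'M[R]_n) (a : R).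

Definition anticomm A B := A *m B + B *m A.

Lemma anticommC A B : anticomm A B = anticomm B A.
Proof. by rewrite /anticomm addrC. Qed.

Lemma anticomm0l A : anticomm 0 A = 0.
Proof. by rewrite /anticomm mul0mx mulmx0 addr0. Qed.

Lemma anticomm0r A : anticomm A 0 = 0.
Proof. by rewrite anticommC anticomm0l. Qed.

Lemma anticommDl A B L : anticomm (A + B) L = anticomm A L + anticomm B L.
Proof. by rewrite /anticomm mulmxDl mulmxDr addrACA. Qed.

Lemma anticommDr A B L : anticomm L (A + B) = anticomm L A + anticomm L B.
Proof. by rewrite !(anticommC L) anticommDl. Qed.

Lemma anticommZl a A B : anticomm (a *: A) B = a *: anticomm A B.
Proof. by rewrite /anticomm -scalemxAl -scalemxAr scalerDr. Qed.

Lemma anticommZr a A B : anticomm A (a *: B) = a *: anticomm A B.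
Proof. by rewrite !(anticommC A) anticommZl. Qed.

Lemma anticomm_sqr A : anticomm A A = 2 *: (A *m A).
Proof. by rewrite /anticomm scaler_nat. Qed.

Lemma anticomm_sqrN1 A : A *m A = - 1%:M -> anticomm A A = (- 2)%:M.
Proof. by move=> AA; rewrite anticomm_sqr AA scalerN scale_scalar_mx mulr1 raddfN. Qed.

Lemma scalar_mx_eq0 a : (a%:M == 0 :> 'M[R]_n.+1) = (a == 0).
Proof.
apply/eqP/eqP => [/matrixP/(_ 0 0)|->]; last by rewrite raddf0.
by rewrite !mxE eqxx mulr1n.
Qed.

Lemma sqr_neq0 (M : 'M[R]_n.+1) : M *m M = - 1%:M -> M != 0.
Proof. by apply: contra_eqN => /eqP->; rewrite mul0mx eq_sym oppr_eq0 oner_eq0. Qed.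

Lemma sqr_scale (M : 'M[R]_n.+1) x :
  M *m M = - 1%:M -> (x *: M) *m (x *: M) = - 1%:M -> x ^+ 2 = 1.
Proof.
move=> MM; rewrite -scalemxAl -scalemxAr scalerA MM scalerN scale_scalar_mx mulr1.
by move/oppr_inj/matrixP/(_ 0 0); rewrite !mxE eqxx !mulr1n expr2.
Qed.

Lemma is_scalar_mx_lin a A B :
  is_scalar_mx A -> is_scalar_mx B -> is_scalar_mx (a *: A + B).
Proof.
move=> /is_scalar_mxP[x ->] /is_scalar_mxP[y ->]; apply/is_scalar_mxP.
by exists (a * x + y); rewrite scale_scalar_mx raddfD.
Qed.

Lemma is_scalar_mx_scale a A : is_scalar_mx A -> is_scalar_mx (a *: A).
Proof. by move=> sA; rewrite -[_ *: _]addr0 is_scalar_mx_lin ?mx0_is_scalar. Qed.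

Lemma is_scalar_mxDr A B : is_scalar_mx B -> is_scalar_mx (A + B) = is_scalar_mx A.
Proof.
move=> sB; apply/idP/idP => [sAB|sA]; last by rewrite -[A]scale1r is_scalar_mx_lin.
by rewrite -(addrK B A) -[A + B]scale1r is_scalar_mx_lin // -scaleN1r is_scalar_mx_scale.
Qed.

Lemma is_scalar_mxZ a A : a != 0 -> is_scalar_mx (a *: A : 'M[R]_n) = is_scalar_mx A.
Proof.
move=> a0; apply/idP/idP => [sA|]; last exact: is_scalar_mx_scale.
by rewrite -(scalerK a0 A) is_scalar_mx_scale.
Qed.

Lemma mxtrace_anticomm_unit A B : B \in unitmx -> A *m B = - (B *m A) -> \tr A = 0.
Proof.
move=> uB AB; have : \tr A = - \tr A.
  rewrite -{1}[A]mulmx1 -(mulmxV uB) mulmxA AB mxtrace_mulC mulmxN mulmxA.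
  by rewrite mulVmx // mul1mx; apply: raddfN.
by move/eqP; rewrite -subr_eq0 opprK -mulr2n mulrn_eq0 /= => /eqP.
Qed.

Lemma sqrN1_unit A : A *m A = - 1%:M -> A \in unitmx.
Proof. by move=> AA; case: (@mulmx1_unit _ _ A (- A)); rewrite // mulmxN AA opprK. Qed.

Definition mxconj P K := P *m K *m invmx P.

Lemma mxconj_scalar P a : P \in unitmx -> mxconj P a%:M = a%:M.
Proof. by move=> uP; rewrite /mxconj mul_mx_scalar -scalemxAl mulmxV // scale_scalar_mx mulr1. Qed.

Section Conjugation.
Variables (P : 'M[R]_n).
Hypothesis uP : P \in unitmx.

Lemma mxconjM A B : mxconj P (A *m B) = mxconj P A *m mxconj P B.
Proof. by rewrite /mxconj !mulmxA mulmxKV. Qed.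

Lemma mxconjD A B : mxconj P (A + B) = mxconj P A + mxconj P B.
Proof. by rewrite /mxconj mulmxDr mulmxDl. Qed.

Lemma mxconj0 : mxconj P 0 = 0.
Proof. by rewrite /mxconj mulmx0 mul0mx. Qed.

Lemma mxconjZ a A : mxconj P (a *: A) = a *: mxconj P A.
Proof. by rewrite /mxconj -scalemxAr -scalemxAl. Qed.

Lemma mxconjK : cancel (mxconj P) (mxconj (invmx P)).
Proof. by move=> K; rewrite /mxconj invmxK !mulmxA mulVmx // mul1mx -mulmxA mulVmx ?mulmx1. Qed.

Lemma mxconj_anticomm A B : mxconj P (anticomm A B) = anticomm (mxconj P A) (mxconj P B).
Proof. by rewrite /anticomm mxconjD !mxconjM. Qed.

Lemma mxconj_sqrN1 A : A *m A = - 1%:M -> mxconj P A *m mxconj P A = - 1%:M.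
Proof. by move=> AA; rewrite -mxconjM AA -raddfN (mxconj_scalar _ uP). Qed.

Lemma is_scalar_mxconj A : is_scalar_mx (mxconj P A) = is_scalar_mx A.
Proof.
apply/idP/idP => /is_scalar_mxP[a hA]; apply/is_scalar_mxP; exists a; last first.
  by rewrite hA (mxconj_scalar _ uP).
by rewrite -(mxconjK A) hA mxconj_scalar ?unitmx_inv.
Qed.

Lemma mxconj_vspace_inv (V : {vspace 'M[R]_n}) :
  {in V, forall K, mxconj P K \in V} -> {in V, forall K, mxconj (invmx P) K \in V}.
Proof.
move=> PV; pose f := (linfun (mulmxr (invmx P)) \o linfun (mulmx P))%VF.
have fE K : f K = mxconj P K by rewrite comp_lfunE !lfunE.
have /eqP fV : (f @: V)%VS == V.
  rewrite eqEdim limg_dim_eq ?leqnn ?andbT.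
    by apply/subvP=> _ /memv_imgP[K VK ->]; rewrite fE PV.
  apply/eqP; rewrite (eqP (_ : lker f == 0%VS)) ?capv0 //.
  by apply/lker0P=> K L; rewrite !fE => /(can_inj mxconjK).
by move=> K; rewrite -{1}fV => /memv_imgP[L VL ->]; rewrite fE mxconjK.
Qed.

End Conjugation.

Lemma mxconjVK P : P \in unitmx -> cancel (mxconj (invmx P)) (mxconj P).
Proof. by move=> uP; rewrite -{2}[P]invmxK; apply: mxconjK; rewrite unitmx_inv. Qed.

End Matrices.

Section AnticommutingStructures.
Variables (R : realFieldType) (J : nat -> 'M[R]_8) (c s : R).
Hypothesis sqrJ : forall i, (1 <= i <= 7)%N -> J i *m J i = - 1%:M.
Hypothesis anticommJ : forall i j, (1 <= i <= 7)%N -> (1 <= j <= 7)%N -> i != j ->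
  J i *m J j = - (J j *m J i).
Hypothesis cs1 : c ^+ 2 + s ^+ 2 = 1.
Hypotheses (c_neq0 : c != 0) (s_neq0 : s != 0).

Definition J67 := J 6 *m J 7.
Definition J' := c *: J 7 + s *: J67.
Definition W : {vspace 'M[R]_8} := <<[seq J i | i <- iota 1 5]>>%VS.
Definition V : {vspace 'M[R]_8} := <<[seq J i | i <- iota 1 6] ++ [:: J']>>%VS.

Lemma anticommJ0 i j : (1 <= i <= 7)%N -> (1 <= j <= 7)%N -> i != j ->
  anticomm (J i) (J j) = 0.
Proof. by move=> hi hj hij; rewrite /anticomm anticommJ // addNr. Qed.

Lemma sqrJ67 : J67 *m J67 = - 1%:M.
Proof.
rewrite /J67 mulmxA -(mulmxA (J 6)) (@anticommJ 7 6) // mulmxN mulNmx mulmxA.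
by rewrite sqrJ // !mulNmx mul1mx opprK sqrJ.
Qed.

Lemma anticomm_J6J67 : anticomm (J 6) J67 = 0.
Proof.
rewrite /anticomm /J67 mulmxA sqrJ // -mulmxA (@anticommJ 7 6) // mulmxN mulmxA.
by rewrite sqrJ // !mulNmx mul1mx subrr.
Qed.

Lemma anticomm_J7J67 : anticomm (J 7) J67 = 0.
Proof. by rewrite /anticomm /J67 mulmxA (@anticommJ 7 6) // mulNmx addNr. Qed.

Lemma J6J' : J 6 *m J' = c *: J67 - s *: J 7.
Proof.
by rewrite /J' mulmxDr -!scalemxAr /J67 mulmxA sqrJ // mulNmx mul1mx scalerN.
Qed.

Lemma J7E : J 7 = c *: J' + (- s) *: (J 6 *m J').
Proof.
rewrite scaleNr J6J' /J' scalerDr scalerBr !scalerA (mulrC s c) opprB.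
by rewrite addrACA subrr addr0 -scalerDl -!expr2 cs1 scale1r.
Qed.

Lemma anticomm_J6J' : anticomm (J 6) J' = 0.
Proof. by rewrite /J' anticommDr !anticommZr anticommJ0 // anticomm_J6J67 !scaler0 addr0. Qed.

Lemma sqrJ' : J' *m J' = - 1%:M.
Proof.
rewrite /J' mulmxDl !mulmxDr -!scalemxAl -!scalemxAr !scalerA sqrJ // sqrJ67 (mulrC s c).
rewrite [X in _ + X]addrC addrACA -scalerDr -/(anticomm (J 7) J67) anticomm_J7J67 scaler0 addr0.
by rewrite -scalerDl -!expr2 cs1 scale1r.
Qed.

Lemma W_ind (Pr : 'M[R]_8 -> Prop) :
    Pr 0 -> (forall a u v, Pr u -> Pr v -> Pr (a *: u + v)) ->
    (forall i, (1 <= i <= 5)%N -> Pr (J i)) ->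
  {in W, forall u, Pr u}.
Proof.
move=> Pr0 PrD PrJ; apply: span_ind => // x /mapP[i]; rewrite mem_iota => hi ->.
by apply: PrJ; rewrite -ltnS.
Qed.

Lemma memW_J i : (1 <= i <= 5)%N -> J i \in W.
Proof. by move=> hi; apply/memv_span/map_f; rewrite mem_iota ltnS. Qed.

Lemma anticommW (i : nat) : (6 <= i <= 7)%N -> {in W, forall u, anticomm u (J i) = 0}.
Proof.
move=> hi; apply: W_ind => [|a u v hu hv|k hk]; first by rewrite anticomm0l.
  by rewrite anticommDl anticommZl hu hv scaler0 addr0.
by apply: anticommJ0; lia.
Qed.

Lemma W_commJ67 : {in W, forall u, u *m J67 = J67 *m u}.
Proof.
move=> u hu; rewrite /J67 mulmxA.
have /eqP : anticomm u (J 6) = 0 by apply: anticommW.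
rewrite addr_eq0 => /eqP->; rewrite mulNmx -!mulmxA.
have /eqP : anticomm u (J 7) = 0 by apply: anticommW.
by rewrite addr_eq0 => /eqP->; rewrite mulmxN opprK.
Qed.

Lemma mxtrace_WJ67 : {in W, forall u, \tr (u *m J67) = 0}.
Proof.
(* J_i J6 J7 anticommutes with the invertible J_k for any k <= 5 other than i. *)
apply: W_ind => [|a u v hu hv|i hi]; first by rewrite mul0mx raddf0.
  by rewrite mulmxDl -scalemxAl raddfD /= linearZ /= hu hv mulr0 addr0.
pose k := if i == 1%N then 2%N else 1%N.
have hk : (1 <= k <= 5)%N by rewrite /k; case: ifP.
have hJk : J k \in unitmx by apply/sqrN1_unit/sqrJ; lia.
apply: (mxtrace_anticomm_unit hJk); rewrite -mulmxA -(W_commJ67 (memW_J hk)) mulmxA.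
have hik : i != k by rewrite /k; case: ifP => /eqP; lia.
by rewrite (@anticommJ i k) ?mulNmx ?mulmxA //; lia.
Qed.

Lemma anticommW_J7J67 a b :
  {in W, forall u, anticomm u (a *: J 7 + b *: J67) = (2 * b) *: (u *m J67)}.
Proof.
move=> u hu; rewrite anticommDr anticommZr anticommW // scaler0 add0r anticommZr.
by rewrite /anticomm -W_commJ67 // -mulr2n -scaler_nat scalerA mulrC.
Qed.

Lemma anticommW_J' : {in W, forall u, anticomm u J' = (2 * s) *: (u *m J67)}.
Proof. exact: anticommW_J7J67. Qed.

Lemma anticommW_J6J' : {in W, forall u, anticomm u (J 6 *m J') = (2 * c) *: (u *m J67)}.
Proof. by move=> u hu; rewrite J6J' addrC -scaleNr anticommW_J7J67. Qed.

Lemma anticommW_scalar : {in W &, forall u v, is_scalar_mx (anticomm u v)}.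
Proof.
move=> u v hu; move: u hu v; apply: W_ind => [|a u w hu hw|i hi].
- by move=> v _; rewrite anticomm0l mx0_is_scalar.
- by move=> v hv; rewrite anticommDl anticommZl is_scalar_mx_lin ?hu ?hw.
apply: W_ind => [|a u w hu hw|j hj]; first by rewrite anticomm0r mx0_is_scalar.
  by rewrite anticommDr anticommZr is_scalar_mx_lin.
have [hi7 hj7] : (1 <= i <= 7)%N /\ (1 <= j <= 7)%N by lia.
have [<-|hij] := eqVneq i j; last by rewrite anticommJ0 ?mx0_is_scalar.
by rewrite anticomm_sqr sqrJ // scalerN scale_scalar_mx -raddfN scalar_mx_is_scalar.
Qed.

Lemma W_mulJ67_scalar : {in W, forall u, is_scalar_mx (u *m J67) -> u = 0}.
Proof.
move=> u hu /is_scalar_mxP[a uJ67]; have : \tr (u *m J67) = 0 by apply: mxtrace_WJ67.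
rewrite uJ67 mxtrace_scalar => /eqP; rewrite mulrn_eq0 /= => /eqP a0.
have : u *m J67 *m J67 = 0 by rewrite uJ67 a0 raddf0 mul0mx.
by rewrite -mulmxA sqrJ67 mulmxN mulmx1 => /eqP; rewrite oppr_eq0 => /eqP.
Qed.

Lemma JJ67_nonscalar k : (1 <= k <= 5)%N -> ~~ is_scalar_mx (J k *m J67).
Proof.
move=> hk; apply/negP => /(W_mulJ67_scalar (memW_J hk)) Jk0.
have /sqrJ/sqr_neq0 : (1 <= k <= 7)%N by lia.
by rewrite Jk0 eqxx.
Qed.

Lemma V_ind (Pr : 'M[R]_8 -> Prop) :
    Pr 0 -> (forall a u v, Pr u -> Pr v -> Pr (a *: u + v)) ->
    (forall i, (1 <= i <= 6)%N -> Pr (J i)) -> Pr J' ->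
  {in V, forall u, Pr u}.
Proof.
move=> Pr0 PrD PrJ PrJ'; apply: span_ind => // x; rewrite mem_cat mem_seq1.
by case/orP=> [/mapP[i]|/eqP->//]; rewrite mem_iota ltnS => hi ->; apply: PrJ.
Qed.

Lemma memV_J i : (1 <= i <= 6)%N -> J i \in V.
Proof. by move=> hi; apply/memv_span; rewrite mem_cat map_f // mem_iota ltnS. Qed.

Lemma memV_J' : J' \in V.
Proof. by apply/memv_span; rewrite mem_cat mem_seq1 eqxx orbT. Qed.

Lemma V_decomp L : L \in V -> exists2 u, u \in W & exists a b, L = u + a *: J 6 + b *: J'.
Proof.
rewrite /V (iotaD 1 5 1) map_cat -catA !span_cat !span_seq1.
case/memv_addP=> u hu [_ /memv_addP[_ /vlineP[a ->] [_ /vlineP[b ->] ->]] ->].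
by exists u => //; exists a, b; rewrite addrA.
Qed.

Lemma anticommV_J6 : {in V, forall K, is_scalar_mx (anticomm K (J 6))}.
Proof.
apply: V_ind => [|a u v hu hv|i hi|]; last by rewrite anticommC anticomm_J6J' mx0_is_scalar.
- by rewrite anticomm0l mx0_is_scalar.
- by rewrite anticommDl anticommZl is_scalar_mx_lin.
have [->|hi6] := eqVneq i 6; last by rewrite anticommJ0 ?mx0_is_scalar //; lia.
by rewrite anticomm_sqr sqrJ // scalerN scale_scalar_mx -raddfN scalar_mx_is_scalar.
Qed.

Lemma V_radical L : L \in V -> is_scalar_mx (anticomm J' L) ->
  is_scalar_mx (anticomm (J 1) L) -> exists a, L = a *: J 6.
Proof.
have two0 : (2 : R) != 0 by rewrite pnatr_eq0.
case/V_decomp=> u hu [a [b ->]] sJ' sJ1.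
have u0 : u = 0.
  apply: (W_mulJ67_scalar hu); move: sJ'.
  rewrite !anticommDr !anticommZr (anticommC J' u) anticommW_J' // (anticommC J' (J 6)).
  rewrite anticomm_J6J' anticomm_sqrN1 ?sqrJ' // scaler0 addr0 scale_scalar_mx.
  by rewrite is_scalar_mxDr ?scalar_mx_is_scalar // is_scalar_mxZ ?mulf_neq0.
exists a; have [->|b0] := eqVneq b 0; first by rewrite u0 scale0r add0r addr0.
have /negP[] := JJ67_nonscalar (isT : (1 <= 1 <= 5)%N).
move: sJ1; rewrite u0 !anticommDr !anticommZr anticommW ?anticommW_J' ?memW_J //.
by rewrite anticomm0r scaler0 !add0r !is_scalar_mxZ ?mulf_neq0.
Qed.

Lemma V_anticommJ6_sqr L : L \in V -> anticomm (J 6) L = 0 -> is_scalar_mx (L *m L) ->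
  L \in W \/ exists b, L = b *: J'.
Proof.
have two0 : (2 : R) != 0 by rewrite pnatr_eq0.
case/V_decomp=> u hu [a [b ->]] aJ6 sL.
have a0 : a = 0.
  move: aJ6; rewrite !anticommDr !anticommZr (anticommC (J 6) u) anticommW //.
  rewrite anticomm_J6J' anticomm_sqrN1 ?sqrJ // scaler0 addr0 add0r scale_scalar_mx.
  by move/eqP; rewrite scalar_mx_eq0 mulf_eq0 oppr_eq0 (negbTE two0) orbF => /eqP.
move: sL; rewrite a0 scale0r addr0 => sL.
have [->|b0] := eqVneq b 0; [by left; rewrite scale0r addr0 | right; exists b].
suff -> : u = 0 by rewrite add0r.
apply: (W_mulJ67_scalar hu).
rewrite -(is_scalar_mxZ _ two0) -anticomm_sqr anticommDl !anticommDr !anticommZl in sL.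
rewrite !anticommZr (anticommC J' u) anticommW_J' // (anticomm_sqrN1 sqrJ') in sL.
rewrite scale_scalar_mx [X in X + _]addrC addrACA is_scalar_mxDr in sL; last first.
  rewrite -[anticomm u u]scale1r is_scalar_mx_lin ?anticommW_scalar //.
  by rewrite scale_scalar_mx scalar_mx_is_scalar.
by rewrite -mulr2n -scaler_nat !is_scalar_mxZ ?mulf_neq0 in sL.
Qed.

Section Normalizer.
Variable P : 'M[R]_8.
Hypotheses (uP : P \in unitmx) (PV : {in V, forall K, mxconj P K \in V}).

Lemma mxconj_J6 : exists2 l, l ^+ 2 = 1 & mxconj P (J 6) = l *: J 6.
Proof.
have sK K : K \in V -> is_scalar_mx (anticomm K (mxconj P (J 6))).
  move=> /(mxconj_vspace_inv uP PV) hK; rewrite -(mxconjVK uP K) -mxconj_anticomm //.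
  by rewrite is_scalar_mxconj // anticommV_J6.
have [l hl] := V_radical (PV (memV_J (isT : (1 <= 6 <= 6)%N))) (sK _ memV_J')
  (sK _ (memV_J (isT : (1 <= 1 <= 6)%N))).
exists l => //; apply: (sqr_scale (@sqrJ 6 isT)).
by rewrite -hl mxconj_sqrN1 ?sqrJ.
Qed.

Lemma mxconj_W_or_J' E : E \in V -> anticomm (J 6) E = 0 -> E *m E = - 1%:M ->
  mxconj P E \in W \/ exists b, mxconj P E = b *: J'.
Proof.
move=> hE aE EE; have [l l2 hl] := mxconj_J6.
apply: V_anticommJ6_sqr; first exact: PV; last first.
  by rewrite mxconj_sqrN1 // -raddfN scalar_mx_is_scalar.
have l0 : l != 0 by apply/eqP => l0; move/eqP: l2; rewrite l0 expr0n /= eq_sym oner_eq0.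
have /eqP := congr1 (mxconj P) aE.
by rewrite mxconj_anticomm // hl anticommZl mxconj0 // scaler_eq0 (negbTE l0) => /eqP.
Qed.

Lemma mxconj_J_W_or_J' k : (1 <= k <= 5)%N ->
  mxconj P (J k) \in W \/ exists b, mxconj P (J k) = b *: J'.
Proof.
move=> hk; apply: mxconj_W_or_J'; first by apply: memV_J; lia.
  by apply: anticommJ0; lia.
by apply: sqrJ; lia.
Qed.

Lemma anticomm_mxconj_J_J' k : (1 <= k <= 5)%N ->
  ~~ is_scalar_mx (anticomm (mxconj P (J k)) (mxconj P J')).
Proof.
move=> hk; rewrite -mxconj_anticomm // anticommW_J' ?memW_J // is_scalar_mxconj //.
by rewrite is_scalar_mxZ ?mulf_neq0 ?pnatr_eq0 ?JJ67_nonscalar.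
Qed.

Lemma mxconj_J' : exists2 e, e ^+ 2 = 1 & mxconj P J' = e *: J'.
Proof.
case: (mxconj_W_or_J' memV_J' anticomm_J6J' sqrJ') => [hW|[e he]]; last first.
  by exists e => //; apply: (sqr_scale sqrJ'); rewrite -he mxconj_sqrN1 ?sqrJ'.
have onJ'line k : (1 <= k <= 5)%N -> exists x, mxconj P (J k) = x *: J'.
  move=> hk; case: (mxconj_J_W_or_J' hk) => // hWk.
  by have /negP[] := anticomm_mxconj_J_J' hk; apply: anticommW_scalar.
have [[x hx] [y hy]] := (onJ'line 1%N isT, onJ'line 2%N isT).
have /eqP := congr1 (mxconj P) (anticommJ0 (isT : (1 <= 1 <= 7)%N) (isT : (1 <= 2 <= 7)%N) isT).
rewrite mxconj_anticomm // hx hy anticommZl anticommZr (anticomm_sqrN1 sqrJ') mxconj0 //.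
rewrite !scale_scalar_mx scalar_mx_eq0 !mulf_eq0 oppr_eq0 pnatr_eq0 orbF.
have nz z i : (1 <= i <= 7)%N -> mxconj P (J i) = z *: J' -> z != 0.
  move=> hi hz; apply: contraTneq (sqr_neq0 (mxconj_sqrN1 uP (sqrJ hi))) => z0.
  by rewrite hz z0 scale0r eqxx.
by rewrite (negbTE (nz _ 1%N isT hx)) (negbTE (nz _ 2%N isT hy)).
Qed.

Lemma mxconj_J1 : mxconj P (J 1) \in W.
Proof.
case: (mxconj_J_W_or_J' (isT : (1 <= 1 <= 5)%N)) => // [[x hx]].
have [e _ he] := mxconj_J'; have /negP[] := anticomm_mxconj_J_J' (isT : (1 <= 1 <= 5)%N).
by rewrite hx he anticommZl anticommZr (anticomm_sqrN1 sqrJ') !scale_scalar_mx scalar_mx_is_scalar.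
Qed.

Lemma mxconj_J6_J7_J' : exists e, [/\ e = 1 \/ e = -1, mxconj P (J 6) = J 6,
  mxconj P (J 7) = e *: J 7 & mxconj P J' = e *: J'].
Proof.
have [l l2 hl] := mxconj_J6; have [e e2 he] := mxconj_J'.
(* The anticommutator of P J1 P^-1 (in W) with P J7 P^-1 is 2 c s e (1 - l) P J1 P^-1 J6 J7. *)
have h7 : mxconj P (J 7) = (c * e) *: J' + (- s * l * e) *: (J 6 *m J').
  by rewrite {1}J7E mxconjD !mxconjZ // mxconjM // hl he -scalemxAl -scalemxAr !scalerA.
have l1 : l = 1.
  have /eqP := congr1 (mxconj P) (anticommJ0 (isT : (1 <= 1 <= 7)%N) (isT : (1 <= 7 <= 7)%N) isT).
  rewrite mxconj_anticomm // mxconj0 // h7 anticommDr !anticommZr anticommW_J' ?mxconj_J1 //.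
  rewrite anticommW_J6J' ?mxconj_J1 // !scalerA -scalerDl scaler_eq0 => /orP[|/eqP uJ67].
    have -> : c * e * (2 * s) + - s * l * e * (2 * c) = (2 * c * s * e) * (1 - l) by ring.
    rewrite !mulf_eq0 pnatr_eq0 (negbTE c_neq0) (negbTE s_neq0) subr_eq0 eq_sym /=.
    case/orP=> [/eqP e0|/eqP //]; move: e2.
    by rewrite e0 expr0n /= => /eqP; rewrite eq_sym oner_eq0.
  have /sqrJ/(mxconj_sqrN1 uP)/sqr_neq0 : (1 <= 1 <= 7)%N by [].
  by rewrite (W_mulJ67_scalar mxconj_J1) ?eqxx // uJ67 mx0_is_scalar.
exists e; split => //.
- by move/eqP: e2; rewrite sqrf_eq1 => /orP[] /eqP; [left | right].
- by rewrite hl l1 scale1r.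
by rewrite h7 l1 mulr1 (mulrC c) (mulrC (- s)) -!scalerA -scalerDr -J7E.
Qed.

End Normalizer.

Lemma normalizer_fix N : N \in unitmx -> {in V, forall K, mxconj N K \in V} ->
  exists e, [/\ e = 1 \/ e = -1, invmx N *m J 6 *m N = J 6,
    invmx N *m J 7 *m N = e *: J 7 & invmx N *m J' *m N = e *: J'].
Proof.
move=> uN NV; have uNi : invmx N \in unitmx by rewrite unitmx_inv.
by have := mxconj_J6_J7_J' uNi (mxconj_vspace_inv uN NV); rewrite /mxconj invmxK.
Qed.

Lemma normalizer_no_flip N : N \in unitmx -> {in V, forall K, mxconj N K \in V} ->
  invmx N *m J 6 *m N != - J 6.
Proof.
move=> uN NV; have [e [_ -> _ _]] := normalizer_fix uN NV.
apply/eqP => h6; have : 2 *: J 6 = 0 by rewrite scaler_nat mulr2n {2}h6 subrr.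
by move/eqP; rewrite scaler_eq0 pnatr_eq0 /=; apply/negP/sqr_neq0/sqrJ.
Qed.

End AnticommutingStructures.

Theorem mainTheorem11 (R : realType) (J : nat -> 'M[R]_8) (theta : R) :
  (forall i, (1 <= i <= 7)%N -> ocs (J i)) ->
  (forall i j, (1 <= i <= 7)%N -> (1 <= j <= 7)%N -> i != j ->
      J i *m J j = - (J j *m J i)) ->
  0 < theta < pi / 2 ->
  let J' := cos theta *: J 7%N + sin theta *: (J 6%N *m J 7%N) in
  let V : {vspace 'M[R]_8} :=
    <<[seq J i | i <- iota 1 6] ++ [:: J']>>%VS in
  let W : {vspace 'M[R]_8} := <<[seq J i | i <- iota 1 5]>>%VS in
  (forall N : 'M[R]_8, orthogonal_mx N ->
     (forall K, K \in V -> N *m K *m invmx N \in V) ->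
     exists e7 : R, [/\ e7 = 1 \/ e7 = -1,
        invmx N *m J 6%N *m N = J 6%N,
        invmx N *m J 7%N *m N = e7 *: J 7%N
      & invmx N *m J' *m N = e7 *: J']) /\
  ~ (exists N : 'M[R]_8, [/\ orthogonal_mx N,
        (forall K, K \in V -> N *m K *m invmx N \in V)
      & invmx N *m J 6%N *m N = - J 6%N]) /\
  (forall ip : 'M[R]_8 -> 'M[R]_8 -> R,
     inner_product_on V ip ->
     standard_on W ip ->
     (forall i, (1 <= i <= 5)%N -> ip (J 6%N) (J i) = 0 /\ ip J' (J i) = 0) ->
     ~ WS_pair V ip).
Proof.
move=> hocs anticommJ htheta J' V W.
have sqrJ i : (1 <= i <= 7)%N -> J i *m J i = - 1%:M by case/hocs.
have s_neq0 : sin theta != 0 by rewrite gt_eqF // sin_gt0_pihalf.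
have c_neq0 : cos theta != 0.
  rewrite gt_eqF // cos_gt0_pihalf //; case/andP: htheta => th0 ->.
  by rewrite andbT; have := @pi_gt0 R; lra.
have cs1 := cos2Dsin2 theta.
have fixN := normalizer_fix sqrJ anticommJ cs1 c_neq0 s_neq0.
have no_flip := normalizer_no_flip sqrJ anticommJ cs1 c_neq0 s_neq0.
have J6V : J 6 \in V := memV_J J (cos theta) (sin theta) (isT : (1 <= 6 <= 6)%N).
split; first by move=> N /mulmx1_unit[uN _]; apply: fixN.
split; first by case=> N [/mulmx1_unit[uN _] NV]; apply/eqP/no_flip.
move=> ip _ _ _ /(_ (J 6) 0 J6V) [N [[/mulmx1_unit[uN _] NV _] _ hNJ6]].
have := no_flip N uN NV.
by rewrite -mulmxA -[J 6 *m N]opprK -hNJ6 mulmxN mulmxA mulVmx // mul1mx eqxx.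
Qed.
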